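(* Let $\mathbb G=V_1\times V_2$ be a step-two Carnot group of rank $r$, let $n\geq r$ be an integer and $\pi:\mathbb F_n\to\mathbb G$ a surjective Carnot morphism. Then the real vector spaces $\mathcal A(V_1\times V_2)$ and $\oplus_{k=n-2}^n\Lambda^k(\pi)$ are isomorphic.
   Context: A step-two Carnot group is $\mathbb G=V_1\times V_2$ ($V_1,V_2$ finite-dimensional real vector spaces, $V_2\ne\{0\}$) with a bilinear skew-symmetric $[\cdot,\cdot]:V_1\times V_1\to V_2$ whose image spans $V_2$, and group law $(x,z)\cdot(x',z')=(x+x',z+z'+[x,x'])$; its rank is $\dim V_1$. $\mathcal A(V_1\times V_2)$ is the space of real-valued maps affine in the usual sense on the vector space $V_1\times V_2$. $\mathbb F_n=\Lambda^1(\mathbb R^n)\times\Lambda^2(\mathbb R^n)$ with bracket $[\theta,\theta']=\theta\wedge\theta'$. A Carnot morphism $\pi:\mathbb G\to\mathbb G'$ is $\pi(x,z)=(\pi_1(x),\pi_2(z))$ with $\pi_1,\pi_2$ linear and $\pi_2([x,y])=[\pi_1(x),\pi_1(y)]'$. For $\eta\in\Lambda^k(\mathbb R^n)$, $\operatorname{Anh}^{1,2}_\wedge\eta:=\{(\theta,\omega)\in\mathbb F_n:\theta\wedge\eta=0,\ \omega\wedge\eta=0\}$ and $\Lambda^k(\pi):=\{\eta\in\Lambda^k(\mathbb R^n):\ker\pi\subset\operatorname{Anh}^{1,2}_\wedge\eta\}$. *)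

From HB Require Import structures.
From mathcomp Require Import all_boot all_order all_algebra.
From mathcomp Require Import reals.
Set Implicit Arguments. Unset Strict Implicit. Unset Printing Implicit Defensive.
Import Order.TTheory GRing.Theory Num.Theory.
Local Open Scope ring_scope.

(* The exterior algebra Lambda(R^n): an element eta is the family of its
   coordinates eta(S) on the basis e_S = e_{s1} /\ ... /\ e_{sk}
   (s1 < ... < sk), S ranging over subsets of {0,...,n-1}. *)
Notation ext R n := {ffun {set 'I_n} -> R^o}.

(* sign exponent: e_A /\ e_B = (-1)^(wsign A B) e_(A u B) for disjoint A,B *)
Definition wsign (n : nat) (A B : {set 'I_n}) : nat :=
  #|[set p in setX A B | (p.2 < p.1)%N]|.

Definition wedge (R : fieldType) (n : nat) (a b : ext R n) : ext R n :=
  [ffun S : {set 'I_n} => \sum_(A : {set 'I_n} | A \subset S)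
      (-1) ^+ wsign A (S :\: A) * a A * b (S :\: A)].

Definition homog (R : fieldType) (n k : nat) (eta : ext R n) : Prop :=
  forall S : {set 'I_n}, #|S| != k -> eta S = 0.

(* Lambda^k(pi) for a Carnot morphism pi = (pi1, pi2) : F_n -> G, where pi1
   is (the restriction to Lambda^1 of) p1 and pi2 that of p2 to Lambda^2;
   ker pi = {(theta, omega) : pi1 theta = 0, pi2 omega = 0}. *)
Definition Lambda_pi (R : fieldType) (V1 V2 : vectType R) (n k : nat)
    (p1 : ext R n -> V1) (p2 : ext R n -> V2) (eta : ext R n) : Prop :=
  homog k eta /\
  (forall theta omega : ext R n, homog 1 theta -> homog 2 omega ->
      p1 theta = 0 -> p2 omega = 0 ->
      wedge theta eta = 0 /\ wedge omega eta = 0).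

Definition affine_map (R : fieldType) (V1 V2 : vectType R) (f : V1 * V2 -> R) : Prop :=
  exists l : V1 * V2 -> R,
    (forall (a : R) (p q : V1 * V2), l (a *: p + q) = a * l p + l q) /\
    exists c : R, forall p, f p = l p + c.

Definition step_two_bracket (R : fieldType) (V1 V2 : vectType R) (br : V1 -> V1 -> V2) : Prop :=
  [/\ forall (a : R) (x y z : V1), br (a *: x + y) z = a *: br x z + br y z,
      forall (a : R) (x y z : V1), br z (a *: x + y) = a *: br z x + br z y,
      forall x y : V1, br x y = - br y x,
      (forall W : {vspace V2}, (forall x y : V1, br x y \in W) -> W = fullv) &
      exists z : V2, z != 0].

(* pi = (p1, p2) restricted to F_n = Lambda^1 x Lambda^2 is a surjective Carnot morphism *)
Definition surj_carnot_morphism (R : fieldType) (V1 V2 : vectType R) (br : V1 -> V1 -> V2)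
    (n : nat) (p1 : ext R n -> V1) (p2 : ext R n -> V2) : Prop :=
  [/\ forall (a : R) (x y : ext R n), homog 1 x -> homog 1 y ->
        p1 (a *: x + y) = a *: p1 x + p1 y,
      forall (a : R) (x y : ext R n), homog 2 x -> homog 2 y ->
        p2 (a *: x + y) = a *: p2 x + p2 y,
      forall x y : ext R n, homog 1 x -> homog 1 y ->
        p2 (wedge x y) = br (p1 x) (p1 y),
      forall v : V1, exists x, homog 1 x /\ p1 x = v &
      forall w : V2, exists y, homog 2 y /\ p2 y = w].

Definition in_sum_Lambda_pi (R : fieldType) (V1 V2 : vectType R) (n : nat)
    (p1 : ext R n -> V1) (p2 : ext R n -> V2) (eta : ext R n) : Prop :=
  exists e0 e1 e2 : ext R n,
    [/\ Lambda_pi (n - 2) p1 p2 e0, Lambda_pi (n - 1) p1 p2 e1,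
        Lambda_pi n p1 p2 e2 & eta = e0 + e1 + e2].

From HB Require Import structures.
From mathcomp Require Import all_boot all_order all_algebra.
From mathcomp Require Import reals ring zify.
From mathcomp Require boolp.
Set Implicit Arguments. Unset Strict Implicit. Unset Printing Implicit Defensive.
Import Order.TTheory GRing.Theory Num.Theory.
Local Open Scope ring_scope.

(** Pairing with the top coordinate <.> (the coefficient of e_1 /\ ... /\ e_n)
   identifies Lambda^n, Lambda^(n-1) and Lambda^(n-2) with R, (Lambda^1)^* and
   (Lambda^2)^*.  For eta in the sum put
   Phi eta (v, w) = <th /\ eta> + <om /\ eta> + <eta>, where th and om lift v
   and w along pi; since eta annihilates ker pi under the wedge product, this
   does not depend on the lifts and is affine in (v, w).  Phi is injective:
   eta lives in degrees n, n-1, n-2, and its coordinate on e_S is, up to sign,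
   <e_(~S) /\ eta>, a value of Phi eta when #|~S| <= 2.  It is onto: f = l + c is the
   image of c e_[n] + *(l (pi_1 _, 0)) + *(l (0, pi_2 _)), where * is the Hodge
   dual of a family of coefficients; the last summand annihilates
   th in ker pi_1 because the coordinates of their wedge are
   +- l (0, pi_2 (e_k /\ th)) = +- l (0, [pi_1 e_k, pi_1 th]) = 0. *)

Lemma addr_eq_self0 (V : zmodType) (v : V) : v = v + v -> v = 0.
Proof. by rewrite -{1}[v]addr0 => /addrI. Qed.

Section ExteriorAlgebra.
Variables (R : fieldType) (n : nat).
Implicit Types (x y u th : ext R n) (A B S : {set 'I_n}).

Definition ext_basis A : ext R n := [ffun S => (S == A)%:R].

Definition wsgn A B : R := (-1) ^+ wsign A B.

Lemma ext_coordZ a x S : (a *: x) S = a * x S.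
Proof. by rewrite !ffunE. Qed.

Lemma ext_coordZD a x y S : (a *: x + y) S = a * x S + y S.
Proof. by rewrite !ffunE. Qed.

Lemma wedge_linearl u a x y : wedge (a *: x + y) u = a *: wedge x u + wedge y u.
Proof.
apply/ffunP=> S; rewrite ext_coordZD !ffunE big_distrr -big_split /=.
by apply: eq_bigr => A _; rewrite ext_coordZD; ring.
Qed.

Lemma wedge_linearr u a x y : wedge u (a *: x + y) = a *: wedge u x + wedge u y.
Proof.
apply/ffunP=> S; rewrite ext_coordZD !ffunE big_distrr -big_split /=.
by apply: eq_bigr => A _; rewrite ext_coordZD; ring.
Qed.

Lemma wedgeDr u x y : wedge u (x + y) = wedge u x + wedge u y.
Proof. by rewrite -[x]scale1r wedge_linearr !scale1r. Qed.

Lemma wedge_basisl A y S :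
  wedge (ext_basis A) y S = if A \subset S then wsgn A (S :\: A) * y (S :\: A) else 0.
Proof.
rewrite ffunE; case: ifP => sAS.
  rewrite (bigD1 A) //= ffunE eqxx mulr1 big1 ?addr0 // => B /andP [_ /negbTE nBA].
  by rewrite ffunE nBA mulr0 mul0r.
rewrite big1 // => B sBS; rewrite ffunE.
by have [eBA|_] := eqVneq B A; [rewrite -eBA sBS in sAS | rewrite mulr0 mul0r].
Qed.

Lemma homog0 k : homog k (0 : ext R n).
Proof. by move=> S _; rewrite ffunE. Qed.

Lemma homogZD k a x y : homog k x -> homog k y -> homog k (a *: x + y).
Proof. by move=> hx hy S hS; rewrite ext_coordZD hx // hy // mulr0 addr0. Qed.

Lemma homogD k x y : homog k x -> homog k y -> homog k (x + y).
Proof. by move=> hx hy; rewrite -[x]scale1r; exact: (homogZD 1 hx hy). Qed.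

Lemma homogZ k a x : homog k x -> homog k (a *: x).
Proof. by move=> hx; rewrite -[_ *: _]addr0; exact: (homogZD a hx (@homog0 k)). Qed.

Lemma card_setC_ord S : #|~: S| = (n - #|S|)%N.
Proof. by rewrite cardsCs setCK card_ord. Qed.

Lemma homog_basis A : homog #|A| (ext_basis A).
Proof. by move=> S; rewrite ffunE; have [->|] := eqVneq S A; rewrite ?eqxx. Qed.

Lemma homog_wedge j k m x y :
  (j + k)%N = m -> homog j x -> homog k y -> homog m (wedge x y).
Proof.
move=> <- hx hy S hS; rewrite ffunE big1 // => A sAS.
have cardS : #|S| = (#|A| + #|S :\: A|)%N by rewrite -(cardsID A S) (setIidPr sAS).
have [hA|hA] := eqVneq #|A| j; last by rewrite hx ?mulr0 ?mul0r.
by rewrite hy ?mulr0 //; apply: contraNneq hS => hk; rewrite cardS hA hk.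
Qed.

Lemma homog_gt_eq0 k x : (n < k)%N -> homog k x -> x = 0.
Proof.
move=> ltnk hx; apply/ffunP => S; rewrite ffunE hx //.
by apply: contraTneq ltnk => <-; rewrite -leqNgt -[X in (_ <= X)%N](card_ord n) max_card.
Qed.

Lemma wedge_gt_eq0 j k x y : (n < j + k)%N -> homog j x -> homog k y -> wedge x y = 0.
Proof. by move=> ltn hx hy; apply: homog_gt_eq0 ltn (homog_wedge erefl hx hy). Qed.

Lemma homog_setT_eq0 k x : k != n -> homog k x -> x setT = 0.
Proof. by move=> kn hx; rewrite hx // cardsT card_ord eq_sym. Qed.

Lemma card_eq_setT S : #|S| = n -> S = setT.
Proof. by move=> hS; apply/eqP; rewrite eqEcard subsetT cardsT card_ord hS leqnn. Qed.

Lemma homog_top_eq0 x : homog n x -> x setT = 0 -> x = 0.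
Proof.
move=> hx x0; apply/ffunP => S; rewrite ffunE.
by have [/card_eq_setT ->|] := eqVneq #|S| n; [exact: x0 | exact: hx].
Qed.

Lemma homog_expand k x : homog k x -> x = \sum_(A : {set 'I_n} | #|A| == k) x A *: ext_basis A.
Proof.
move=> hx; apply/ffunP => S; rewrite sum_ffunE.
under eq_bigr do rewrite ext_coordZ ffunE.
have [hS|hS] := eqVneq #|S| k.
  rewrite (bigD1 S) /=; last by rewrite hS.
  rewrite eqxx mulr1 big1 ?addr0 // => A /andP [_ nAS].
  by rewrite eq_sym (negbTE nAS) mulr0.
rewrite hx // big1 // => A /eqP hA.
by have [eSA|_] := eqVneq S A; [rewrite eSA hA eqxx in hS | rewrite mulr0].
Qed.

Definition homog_linear (V : lmodType R) k (g : ext R n -> V) : Prop :=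
  forall a x y, homog k x -> homog k y -> g (a *: x + y) = a *: g x + g y.

Lemma homog_linear0 (V : lmodType R) k (g : ext R n -> V) : homog_linear k g -> g 0 = 0.
Proof.
move=> gl; apply: addr_eq_self0.
by have := gl 1 0 0 (@homog0 k) (@homog0 k); rewrite !scale1r addr0.
Qed.

Lemma homog_linear_sum k (g : ext R n -> R^o) : homog_linear k g -> forall x, homog k x ->
  g x = \sum_(A : {set 'I_n} | #|A| == k) x A * g (ext_basis A).
Proof.
move=> gl x hx; rewrite {1}(homog_expand hx).
apply: (proj2 (big_ind2 (fun u v => homog k u /\ g u = v) _ _ _)).
- by split; [exact: homog0 | exact: homog_linear0 gl].
- move=> u1 v1 u2 v2 [hu1 <-] [hu2 <-]; split; first exact: homogD.
  by rewrite -{1}[u1]scale1r gl // scale1r.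
- move=> A /eqP eA; have hA : homog k (ext_basis A) by rewrite -eA; exact: homog_basis.
  split; first exact: homogZ.
  by rewrite -[_ *: _]addr0 gl ?(homog_linear0 gl) ?addr0 //; exact: (@homog0 k).
Qed.

Lemma wedge_fiber (V : lmodType R) k (p : ext R n -> V) x th th' :
    homog_linear k p -> (forall u, homog k u -> p u = 0 -> wedge u x = 0) ->
  homog k th -> homog k th' -> p th = p th' -> wedge th x = wedge th' x.
Proof.
move=> pl ker hth hth' e; have hd : homog k ((-1) *: th' + th) by apply: homogZD.
have -> : th = 1 *: ((-1) *: th' + th) + th' by rewrite scale1r scaleN1r addrAC addNr add0r.
by rewrite wedge_linearl ker ?scaler0 ?add0r // pl // e scaleN1r addNr.
Qed.

Lemma wsgn_sqr A B : wsgn A B * wsgn A B = 1.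
Proof. by rewrite -exprMn mulrNN mulr1 expr1n. Qed.

Lemma wsgnUl A1 A2 B : [disjoint A1 & A2] -> wsgn (A1 :|: A2) B = wsgn A1 B * wsgn A2 B.
Proof.
move=> dA; rewrite /wsgn -exprD /wsign.
set s1 := [set p in setX A1 B | _]; set s2 := [set p in setX A2 B | _].
have -> : [set p in setX (A1 :|: A2) B | (p.2 < p.1)%N] = s1 :|: s2.
  by apply/setP => p; rewrite !inE !andb_orl.
congr (_ ^+ _); apply/eqP; rewrite (leq_card_setU s1 s2).2 -setI_eq0.
apply/eqP/setP => p; rewrite !inE; apply/negP.
by case/andP => /andP [/andP [/(disjointFr dA) -> _] _].
Qed.

Lemma wsgnUr A B1 B2 : [disjoint B1 & B2] -> wsgn A (B1 :|: B2) = wsgn A B1 * wsgn A B2.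
Proof.
move=> dB; rewrite /wsgn -exprD /wsign.
set s1 := [set p in setX A B1 | _]; set s2 := [set p in setX A B2 | _].
have -> : [set p in setX A (B1 :|: B2) | (p.2 < p.1)%N] = s1 :|: s2.
  by apply/setP => p; rewrite !inE andb_orr !andb_orl.
congr (_ ^+ _); apply/eqP; rewrite (leq_card_setU s1 s2).2 -setI_eq0.
apply/eqP/setP => p; rewrite !inE; apply/negP.
by case/andP => /andP [/andP [_ /(disjointFr dB) ->]]; rewrite andbF.
Qed.

Lemma wsgn_setD1 (k : 'I_n) B : k \in B ->
  wsgn (B :\ k) (~: B) * wsgn B (~: B) = wsgn [set k] (~: [set k]) * wsgn [set k] (B :\ k).
Proof.
move=> kB.
have dk : [disjoint [set k] & B :\ k] by rewrite disjoints1 !inE eqxx.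
have dB : [disjoint ~: B & B :\ k].
  by rewrite -setI_eq0; apply/eqP/setP => i; rewrite !inE andbCA andNb andbF.
have -> : wsgn B (~: B) = wsgn [set k] (~: B) * wsgn (B :\ k) (~: B).
  by rewrite -wsgnUl // setD1K.
have -> : ~: [set k] = ~: B :|: B :\ k.
  by apply/setP => i; rewrite !inE; case: (eqVneq i k) => [->|]; rewrite ?kB //; case: (i \in B).
by rewrite wsgnUr // mulrCA wsgn_sqr mulr1 -mulrA wsgn_sqr mulr1.
Qed.

Lemma wedge_basis_compl_top x S : wedge (ext_basis (~: S)) x setT = wsgn (~: S) S * x S.
Proof. by rewrite wedge_basisl subsetT setTD setCK. Qed.

Definition hodge_dual (k : nat) (L : {set 'I_n} -> R) : ext R n :=
  [ffun S : {set 'I_n} => if #|S| == (n - k)%N then wsgn (~: S) S * L (~: S) else 0].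

Lemma homog_hodge_dual k L : homog (n - k) (hodge_dual k L).
Proof. by move=> S hS; rewrite ffunE (negbTE hS). Qed.

Lemma wedge_hodge_dual_top k L x : homog k x ->
  wedge x (hodge_dual k L) setT = \sum_(A : {set 'I_n} | #|A| == k) x A * L A.
Proof.
move=> hx; rewrite ffunE big_mkcond [RHS]big_mkcond /=; apply: eq_bigr => A _.
rewrite subsetT setTD ffunE setCK card_setC_ord.
have [->|hA] := eqVneq #|A| k; last by rewrite hx ?mulr0 ?mul0r.
by rewrite eqxx mulrCA !mulrA wsgn_sqr mul1r.
Qed.

Lemma wedge_hodge_dual2_coatom L (k : 'I_n) th : homog 1 th ->
  wedge th (hodge_dual 2 L) (~: [set k]) =
  wsgn [set k] (~: [set k]) *
    \sum_(B : {set 'I_n} | #|B| == 2) wedge (ext_basis [set k]) th B * L B.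
Proof.
move=> hth; rewrite ffunE mulr_sumr.
rewrite (reindex_onto (fun B => B :\ k) (fun A => k |: A)) /=; last first.
  by move=> A /subsetP sAk; apply: setU1K; apply/negP => /sAk; rewrite !inE eqxx.
rewrite big_mkcond [RHS]big_mkcond; apply: eq_bigr => B _.
rewrite wedge_basisl sub1set.
have [kB|kNB] := boolP (k \in B); last first.
  have -> : (k |: B :\ k == B) = false.
    by apply: contraNF kNB => /eqP <-; rewrite setU11.
  by rewrite andbF mul0r mulr0; case: ifP.
rewrite setD1K // eqxx andbT.
have -> : B :\ k \subset ~: [set k] by apply/subsetP => i; rewrite !inE => /andP [].
have -> : ~: [set k] :\: (B :\ k) = ~: B.
  by apply/setP => i; rewrite !inE; case: (eqVneq i k) => [->|]; rewrite ?kB //; case: (i \in B).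
rewrite ffunE setCK card_setC_ord.
have [hBk|hBk] := eqVneq #|B :\ k| 1%N; last first.
  by rewrite hth // !mulr0 !mul0r; case: ifP => _; rewrite ?mulr0 ?mul0r.
have -> : #|B| = 2%N by rewrite (cardsD1 k B) kB hBk.
by rewrite eqxx -/(wsgn (B :\ k) (~: B)) mulrACA wsgn_setD1 // -!mulrA.
Qed.

End ExteriorAlgebra.

Arguments ext_basis {R n} A.
Arguments wsgn {R n} A B.
Arguments homog0 {R n} k.
Arguments homog_hodge_dual {R n} k L.

Section Pairing.
Variables (R : fieldType) (V1 V2 : vectType R) (n : nat).
Variables (p1 : ext R n -> V1) (p2 : ext R n -> V2).
Hypotheses (p1_linear : homog_linear 1 p1) (p2_linear : homog_linear 2 p2).
Variables (s1 : V1 -> ext R n) (s2 : V2 -> ext R n).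
Hypothesis s1K : forall v, homog 1 (s1 v) /\ p1 (s1 v) = v.
Hypothesis s2K : forall w, homog 2 (s2 w) /\ p2 (s2 w) = w.
Implicit Types (x y th om : ext R n).

Local Notation in_sum := (in_sum_Lambda_pi p1 p2).

Lemma two_leq_n (w : V2) : w != 0 -> (2 <= n)%N.
Proof.
apply: contraNleq => n_lt2; have [hw <-] := s2K w.
by rewrite (homog_gt_eq0 n_lt2 hw) (homog_linear0 p2_linear).
Qed.

Lemma Lambda_piZD k a x y :
  Lambda_pi k p1 p2 x -> Lambda_pi k p1 p2 y -> Lambda_pi k p1 p2 (a *: x + y).
Proof.
move=> [hx kx] [hy ky]; split=> [|th om hth hom pth pom]; first exact: homogZD.
rewrite !wedge_linearr; have [-> ->] := kx th om hth hom pth pom.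
by have [-> ->] := ky th om hth hom pth pom; rewrite scaler0 addr0.
Qed.

Lemma in_sumZD a x y : in_sum x -> in_sum y -> in_sum (a *: x + y).
Proof.
move=> [x0 [x1 [x2 [hx0 hx1 hx2 ->]]]] [y0 [y1 [y2 [hy0 hy1 hy2 ->]]]].
exists (a *: x0 + y0), (a *: x1 + y1), (a *: x2 + y2); split; try exact: Lambda_piZD.
by rewrite !scalerDr; apply/ffunP => S; rewrite !ffunE; ring.
Qed.

Lemma in_sum_wedge_ker x th om : in_sum x -> homog 1 th -> homog 2 om ->
  p1 th = 0 -> p2 om = 0 -> wedge th x = 0 /\ wedge om x = 0.
Proof.
move=> [x0 [x1 [x2 [[_ k0] [_ k1] [_ k2] ->]]]] hth hom pth pom; rewrite !wedgeDr.
have [-> ->] := k0 _ _ hth hom pth pom; have [-> ->] := k1 _ _ hth hom pth pom.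
by have [-> ->] := k2 _ _ hth hom pth pom; rewrite !addr0.
Qed.

Lemma in_sum_wedge_ker1 x th : in_sum x -> homog 1 th -> p1 th = 0 -> wedge th x = 0.
Proof.
move=> hx hth pth.
exact: (in_sum_wedge_ker hx hth (homog0 2) pth (homog_linear0 p2_linear)).1.
Qed.

Lemma in_sum_wedge_ker2 x om : in_sum x -> homog 2 om -> p2 om = 0 -> wedge om x = 0.
Proof.
move=> hx hom pom.
exact: (in_sum_wedge_ker hx (homog0 1) hom (homog_linear0 p1_linear) pom).2.
Qed.

Definition Phi x (p : V1 * V2) : R :=
  wedge (s1 p.1) x setT + wedge (s2 p.2) x setT + x setT.

Lemma Phi_linear a x y p : Phi (a *: x + y) p = a * Phi x p + Phi y p.
Proof. by rewrite /Phi !wedge_linearr !ext_coordZD; ring. Qed.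

Lemma PhiD x y p : Phi (x + y) p = Phi x p + Phi y p.
Proof. by rewrite -[x]scale1r Phi_linear scale1r mul1r. Qed.

Lemma in_sum_wedge_fiber1 x th th' : in_sum x -> homog 1 th -> homog 1 th' ->
  p1 th = p1 th' -> wedge th x = wedge th' x.
Proof. by move=> hx; apply: wedge_fiber p1_linear _ => u; apply: in_sum_wedge_ker1. Qed.

Lemma in_sum_wedge_fiber2 x om om' : in_sum x -> homog 2 om -> homog 2 om' ->
  p2 om = p2 om' -> wedge om x = wedge om' x.
Proof. by move=> hx; apply: wedge_fiber p2_linear _ => u; apply: in_sum_wedge_ker2. Qed.

Lemma Phi_affine x : in_sum x -> affine_map (Phi x).
Proof.
move=> hx; exists (fun p => wedge (s1 p.1) x setT + wedge (s2 p.2) x setT).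
split; last by exists (x setT).
move=> a p q /=.
have [hp1 ep1] := s1K p.1; have [hq1 eq1] := s1K q.1.
have [hp2 ep2] := s2K p.2; have [hq2 eq2] := s2K q.2.
rewrite (in_sum_wedge_fiber1 hx (s1K _).1 (homogZD a hp1 hq1)); last first.
  by rewrite (s1K _).2 p1_linear // ep1 eq1.
rewrite (in_sum_wedge_fiber2 hx (s2K _).1 (homogZD a hp2 hq2)); last first.
  by rewrite (s2K _).2 p2_linear // ep2 eq2.
by rewrite !wedge_linearl !ext_coordZD; ring.
Qed.

Lemma Phi_eq0 z : in_sum z -> (forall p, Phi z p = 0) -> z = 0.
Proof.
move=> hz Phi_z0.
have s10 := in_sum_wedge_ker1 hz (s1K 0).1 (s1K 0).2.
have s20 := in_sum_wedge_ker2 hz (s2K 0).1 (s2K 0).2.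
have z_top : z setT = 0 by have := Phi_z0 (0, 0); rewrite /Phi /= s10 s20 !ffunE !add0r.
have wedge1_top th : homog 1 th -> wedge th z setT = 0.
  move=> hth; have := Phi_z0 (p1 th, 0).
  rewrite /Phi /= s20 z_top [(0 : ext R n) _]ffunE !addr0.
  by rewrite (in_sum_wedge_fiber1 hz (s1K _).1 hth) ?(s1K _).2.
have wedge2_top om : homog 2 om -> wedge om z setT = 0.
  move=> hom; have := Phi_z0 (0, p2 om).
  rewrite /Phi /= s10 z_top [(0 : ext R n) _]ffunE add0r addr0.
  by rewrite (in_sum_wedge_fiber2 hz (s2K _).1 hom) ?(s2K _).2.
apply/ffunP => S; rewrite [RHS]ffunE.
have coordS : wedge (ext_basis (~: S)) z setT = 0 -> z S = 0.
  by rewrite wedge_basis_compl_top => /eqP; rewrite mulf_eq0 signr_eq0 => /eqP.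
have cardC := card_setC_ord S.
have [/card_eq_setT ->//|hn] := eqVneq #|S| n.
have [hn1|hn1] := eqVneq #|S| (n - 1)%N.
  by apply/coordS/wedge1_top; rewrite (_ : 1%N = #|~: S|); [exact: homog_basis | lia].
have [hn2|hn2] := eqVneq #|S| (n - 2)%N.
  by apply/coordS/wedge2_top; rewrite (_ : 2%N = #|~: S|); [exact: homog_basis | lia].
case: hz => [x0 [x1 [x2 [[h0 _] [h1 _] [h2 _] ->]]]].
by rewrite !ffunE h0 // h1 // h2 // !addr0.
Qed.

Lemma Phi_inj x y : in_sum x -> in_sum y -> Phi x =1 Phi y -> x = y.
Proof.
move=> hx hy eqPhi; apply/eqP; rewrite -subr_eq0 -scaleN1r addrC; apply/eqP.
by apply: Phi_eq0 => [|p]; [exact: in_sumZD | rewrite Phi_linear eqPhi mulN1r addNr].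
Qed.

Lemma Lambda_pi_top c : Lambda_pi n p1 p2 (c *: ext_basis setT).
Proof.
have htop : homog n (c *: ext_basis [set: 'I_n]).
  by apply: homogZ; rewrite -[X in homog X](card_ord n) -cardsT; exact: homog_basis.
split=> // th om hth hom _ _.
by split; [apply: (wedge_gt_eq0 _ hth htop) | apply: (wedge_gt_eq0 _ hom htop)]; lia.
Qed.

Lemma Phi_top c p : Phi (c *: ext_basis setT) p = c.
Proof.
have [h1 _] := s1K p.1; have [h2 _] := s2K p.2; have [htop _] := Lambda_pi_top c.
rewrite /Phi (wedge_gt_eq0 _ h1 htop) ?(wedge_gt_eq0 _ h2 htop); try lia.
by rewrite ext_coordZ !ffunE eqxx mulr1 !add0r.
Qed.

Section Surjectivity.
Variable br : V1 -> V1 -> V2.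
Hypothesis p2_wedge : forall th th', homog 1 th -> homog 1 th' ->
  p2 (wedge th th') = br (p1 th) (p1 th').
Hypothesis br_v0 : forall v, br v 0 = 0.
Hypothesis n_ge2 : (2 <= n)%N.
Variable l : V1 * V2 -> R.
Hypothesis l_linear : forall (a : R) (p q : V1 * V2), l (a *: p + q) = a * l p + l q.

Lemma l00 : l (0, 0) = 0.
Proof. by apply: addr_eq_self0; have := l_linear 1 0 0; rewrite scale1r addr0 mul1r. Qed.

Lemma l_linear1 a (v v' : V1) : l (a *: v + v', 0) = a * l (v, 0) + l (v', 0).
Proof. by rewrite -l_linear; congr l; apply/eqP; rewrite xpair_eqE /= scaler0 addr0 !eqxx. Qed.

Lemma l_linear2 a (w w' : V2) : l (0, a *: w + w') = a * l (0, w) + l (0, w').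
Proof. by rewrite -l_linear; congr l; apply/eqP; rewrite xpair_eqE /= scaler0 addr0 !eqxx. Qed.

Lemma l_pair v w : l (v, w) = l (v, 0) + l (0, w).
Proof.
rewrite -[l (v, 0)]mul1r -l_linear; congr l.
by apply/eqP; rewrite xpair_eqE /= !scale1r addr0 add0r !eqxx.
Qed.

Definition dual1 := hodge_dual 1 (fun A => l (p1 (ext_basis A), 0)).
Definition dual2 := hodge_dual 2 (fun A => l (0, p2 (ext_basis A))).

Lemma wedge_dual1_top th : homog 1 th -> wedge th dual1 setT = l (p1 th, 0).
Proof.
move=> hth; rewrite wedge_hodge_dual_top //; symmetry.
apply: (homog_linear_sum (g := fun th => l (p1 th, 0)) _ hth) => a x y hx hy.
by rewrite p1_linear // l_linear1.
Qed.

Lemma wedge_dual2_top om : homog 2 om -> wedge om dual2 setT = l (0, p2 om).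
Proof.
move=> hom; rewrite wedge_hodge_dual_top //; symmetry.
apply: (homog_linear_sum (g := fun om => l (0, p2 om)) _ hom) => a x y hx hy.
by rewrite p2_linear // l_linear2.
Qed.

Lemma Lambda_pi_dual1 : Lambda_pi (n - 1) p1 p2 dual1.
Proof.
split=> [|th om hth hom pth _]; first exact: homog_hodge_dual.
split; last by apply: (wedge_gt_eq0 _ hom (homog_hodge_dual _ _)); lia.
apply: homog_top_eq0; first by apply: (homog_wedge _ hth (homog_hodge_dual _ _)); lia.
by rewrite wedge_dual1_top // pth l00.
Qed.

Lemma wedge_ker1_dual2 th : homog 1 th -> p1 th = 0 -> wedge th dual2 = 0.
Proof.
move=> hth pth; apply/ffunP => S; rewrite [RHS]ffunE.
have [hS|hS] := eqVneq #|S| (n - 1)%N; last first.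
  by apply: (homog_wedge _ hth (homog_hodge_dual _ _)) hS; lia.
have /cards1P [k Sk] : #|~: S| == 1%N by rewrite card_setC_ord hS; apply/eqP; lia.
rewrite -[S]setCK Sk wedge_hodge_dual2_coatom //.
have hk : homog 1 (ext_basis [set k] : ext R n) by rewrite -(cards1 k); exact: homog_basis.
have hkth := homog_wedge erefl hk hth.
rewrite -(homog_linear_sum (g := fun om => l (0, p2 om)) _ hkth) /=; last first.
  by move=> a x y hx hy; rewrite p2_linear // l_linear2.
by rewrite p2_wedge // pth br_v0 l00 mulr0.
Qed.

Lemma Lambda_pi_dual2 : Lambda_pi (n - 2) p1 p2 dual2.
Proof.
split=> [|th om hth hom pth pom]; first exact: homog_hodge_dual.
split; first exact: wedge_ker1_dual2.
apply: homog_top_eq0; first by apply: (homog_wedge _ hom (homog_hodge_dual _ _)); lia.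
by rewrite wedge_dual2_top // pom l00.
Qed.

Lemma Phi_dual1 p : Phi dual1 p = l (p.1, 0).
Proof.
have [h1 e1] := s1K p.1; have [h2 _] := s2K p.2.
rewrite /Phi (wedge_dual1_top h1) e1 (wedge_gt_eq0 _ h2 (homog_hodge_dual _ _)); last lia.
by rewrite (homog_setT_eq0 _ (homog_hodge_dual _ _)) ?ffunE ?addr0 //; lia.
Qed.

Lemma Phi_dual2 p : Phi dual2 p = l (0, p.2).
Proof.
have [h1 _] := s1K p.1; have [h2 e2] := s2K p.2.
rewrite /Phi (wedge_dual2_top h2) e2.
rewrite (homog_setT_eq0 _ (homog_wedge erefl h1 (homog_hodge_dual _ _))); last lia.
by rewrite (homog_setT_eq0 _ (homog_hodge_dual _ _)) ?add0r ?addr0 //; lia.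
Qed.

End Surjectivity.

Lemma Phi_surj (br : V1 -> V1 -> V2) :
    (forall th th', homog 1 th -> homog 1 th' -> p2 (wedge th th') = br (p1 th) (p1 th')) ->
    (forall v, br v 0 = 0) -> (2 <= n)%N ->
  forall f, affine_map f -> exists x, in_sum x /\ Phi x =1 f.
Proof.
move=> p2_wedge br_v0 n_ge2 f [l [l_lin [c fE]]].
exists (dual2 l + dual1 l + c *: ext_basis setT); split.
  exists (dual2 l), (dual1 l), (c *: ext_basis setT); split=> //.
  - exact: (Lambda_pi_dual2 p2_wedge br_v0 n_ge2 l_lin).
  - exact: (Lambda_pi_dual1 n_ge2 l_lin).
  - exact: Lambda_pi_top.
move=> [v w]; rewrite fE !PhiD Phi_dual2 // Phi_dual1 // Phi_top (l_pair l_lin).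
by rewrite [l (0, _) + _]addrC.
Qed.

End Pairing.

Theorem proposition5p10 (R : realType) (V1 V2 : vectType R)
    (br : V1 -> V1 -> V2) (n : nat)
    (p1 : ext R n -> V1) (p2 : ext R n -> V2) :
  step_two_bracket br ->
  (\dim (fullv : {vspace V1}) <= n)%N ->
  surj_carnot_morphism br p1 p2 ->
  exists Phi : ext R n -> (V1 * V2 -> R),
    [/\ (forall (a : R) (x y : ext R n),
           in_sum_Lambda_pi p1 p2 x -> in_sum_Lambda_pi p1 p2 y ->
           forall p, Phi (a *: x + y) p = a * Phi x p + Phi y p),
        (forall x y : ext R n,
           in_sum_Lambda_pi p1 p2 x -> in_sum_Lambda_pi p1 p2 y ->
           Phi x =1 Phi y -> x = y),
        (forall x : ext R n, in_sum_Lambda_pi p1 p2 x -> affine_map (Phi x)) &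
        (forall f : V1 * V2 -> R, affine_map f ->
           exists x : ext R n, in_sum_Lambda_pi p1 p2 x /\ Phi x =1 f)].
Proof.
(* The rank bound is implied by the surjectivity of [p1]. *)
move=> [_ br_linearr _ _ [w w_neq0]] _ [p1_linear p2_linear p2_wedge sur1 sur2].
have [s1 s1K] := boolp.choice sur1; have [s2 s2K] := boolp.choice sur2.
have br_v0 v : br v 0 = 0.
  by apply: addr_eq_self0; have := br_linearr 1 0 0 v; rewrite !scale1r addr0.
have n_ge2 := two_leq_n p2_linear s2K w_neq0.
exists (Phi s1 s2); split.
- by move=> a x y _ _ p; apply: Phi_linear.
- exact: (Phi_inj p1_linear p2_linear s1K s2K).
- exact: (Phi_affine p1_linear p2_linear s1K s2K).
- exact: (Phi_surj p1_linear p2_linear s1K s2K p2_wedge br_v0 n_ge2).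
Qed.
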